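(* The fine time-grid propagators $\Psi_j=(M_s+\tau_j Q_s)^{-1}M_s$, $j=1,\dots,N$, and the coarse time-grid propagators $\Phi_k=(M_s+\tilde{\tau}_k Q_s)^{-1}M_s$, $k=1,\dots,N_c$, are both strongly stable, i.e. their discrete $l^2$-norms satisfy $\|\Psi_j\|<1$ and $\|\Phi_k\|<1$.
   Context: Setting: the unsteady fractional Laplacian problem $\partial_t u=-(-\Delta)^{\alpha/2}u+f$ on a bounded Lipschitz domain $\Omega\subset\mathbb{R}^d$ with $\alpha\in(0,2)$ is reformulated via the Caffarelli–Silvestre extension on the truncated cylinder $\Omega\times(0,\mathcal{Z})$ with weight $z^\beta$, $\beta=1-\alpha$, and discretized by tensor-product $\mathcal{P}_1\otimes\mathcal{P}_1$ finite elements (spatial basis $\phi_i$, $i=1,\dots,n$; extended-direction basis $\psi_j$, $j=1,\dots,M-1$) and backward Euler in time on a (possibly nonuniform) mesh $0=t_0<\dots<t_N=T$ with steps $\tau_j=t_j-t_{j-1}$. The matrices are $M_s=(\frac{1}{d_\alpha}\int_\Omega\phi_i\phi_q)$, $A_s=(\frac{1}{d_\alpha}\int_\Omega\nabla\phi_i\cdot\nabla\phi_q)$, $M_z=(\int_0^{\mathcal{Z}}z^\beta\psi_j\psi_l)$, $A_z=(\int_0^{\mathcal{Z}}z^\beta\psi_j'\psi_l')$, with $d_\alpha>0$ a normalization constant. Eliminating the auxiliary (non-trace) unknowns gives the time-stepping $(M_s+\tau_{k+1}Q_s)\mathcal{U}_{k+1}=M_s\mathcal{U}_k+\tau_{k+1}\mathcal{F}_{k+1}$,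 where $Q_s$ is the Schur complement $Q_s=(m^z_{11}A_s+a^z_{11}M_s)-(\tilde m_z\otimes A_s+\tilde a_z\otimes M_s)(\tilde M_z\otimes A_s+\tilde A_z\otimes M_s)^{-1}(\tilde m_z^T\otimes A_s+\tilde a_z^T\otimes M_s)$, with $\tilde m_z,\tilde a_z$ the first rows of $M_z,A_z$ without the first entry and $\tilde M_z,\tilde A_z$ the trailing principal submatrices (indices $2,\dots,M-1$); $M_s$ and $M_s^{-1/2}Q_sM_s^{-1/2}$ are SPD. For a coarsening factor $m$, the coarse time grid is $\tilde t_i=t_{mi}$, $i=0,\dots,N_c=N/m$, with steps $\tilde\tau_k=\tilde t_k-\tilde t_{k-1}$. *)

From HB Require Import structures.
From mathcomp Require Import all_boot all_order all_algebra.
From mathcomp Require Import boolp classical_sets reals.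
From mathcomp Require Import mxtens.
Set Implicit Arguments. Unset Strict Implicit. Unset Printing Implicit Defensive.
Import Order.TTheory GRing.Theory Num.Theory.
Local Open Scope ring_scope.

Definition spd {R : realType} {n : nat} (A : 'M[R]_n) : Prop :=
  A^T = A /\ forall v : 'cV[R]_n, v != 0 -> 0 < (v^T *m A *m v) 0 0.

(* Schur complement Q_s of the extension problem, eliminating the non-trace
   unknowns.  Extended-direction matrices Mz Az are (p.+1)x(p.+1), i.e. M-1 = p.+1
   basis functions psi_1..psi_{M-1}; index ord0 is psi_1.
   Unknowns of the eliminated block are ordered with the Kronecker convention
   (extended-direction index) x (spatial index). *)
Definition mz_row {R : realType} {p : nat} (Z : 'M[R]_p.+1) : 'rV[R]_p :=
  \row_(j < p) Z ord0 (lift ord0 j).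
Definition mz_trail {R : realType} {p : nat} (Z : 'M[R]_p.+1) : 'M[R]_p :=
  \matrix_(i < p, j < p) Z (lift ord0 i) (lift ord0 j).

Definition Qs {R : realType} {n p : nat} (Ms As : 'M[R]_n) (Mz Az : 'M[R]_p.+1)
  : 'M[R]_n :=
  let B : 'M[R]_(n, p * n) :=
    castmx (mul1n n, erefl (p * n)) (mz_row Mz *t As + mz_row Az *t Ms) in
  let Bt : 'M[R]_(p * n, n) :=
    castmx (erefl (p * n), mul1n n) ((mz_row Mz)^T *t As + (mz_row Az)^T *t Ms) in
  let C : 'M[R]_(p * n) := mz_trail Mz *t As + mz_trail Az *t Ms in
  (Mz ord0 ord0 *: As + Az ord0 ord0 *: Ms) - B *m invmx C *m Bt.

(* propagator (Ms + tau Q)^{-1} Ms of one backward-Euler step *)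
Definition propagator {R : realType} {n : nat} (Ms Q : 'M[R]_n) (tau : R) : 'M[R]_n :=
  invmx (Ms + tau *: Q) *m Ms.

(* discrete l^2 (mass-matrix weighted) norm of a coefficient vector:
   ||v||_Ms = sqrt (v^T Ms v), the L^2(Omega) norm of the FE function (up to d_alpha) *)
Definition mnorm {R : realType} {n : nat} (Ms : 'M[R]_n) (v : 'cV[R]_n) : R :=
  Num.sqrt ((v^T *m Ms *m v) 0 0).

Definition opnorm {R : realType} {n : nat} (Ms A : 'M[R]_n) : R :=
  sup (fun r : R => exists v : 'cV[R]_n, v != 0 /\ r = mnorm Ms (A *m v) / mnorm Ms v).

From HB Require Import structures.
From mathcomp Require Import all_boot all_order all_algebra.
From mathcomp Require Import boolp classical_sets reals.
From mathcomp Require Import mxtens.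
From mathcomp Require Import ring lra.
Import Order.TTheory GRing.Theory Num.Theory.
Local Open Scope ring_scope.

(* With K = Ms^{-1/2} Q Ms^{-1/2}, w = Ms^{1/2} v and z = Ms^{1/2} (Psi v), one
   step of backward Euler reads (I + tau K) z = w.  Expanding,
   |w|^2 = |z|^2 + 2 tau z^T K z + tau^2 |K z|^2 >= (1 + tau^2 / C) |z|^2,
   where C bounds |K^{-1}|^2 through the Frobenius norm of K^{-1}.  So the
   Ms-norm of Psi v is at most (1 + tau^2 / C)^{-1/2} < 1 times that of v,
   uniformly in v, and the operator norm is < 1 as soon as tau > 0; the
   steps of both time grids are positive because t is increasing. *)

Section EuclideanForms.
Context {R : realType} {n : nat}.
Implicit Types (A B K : 'M[R]_n) (x y z : 'cV[R]_n).

Definition form A x y : R := (x^T *m A *m y) 0 0.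

Definition sqnorm x : R := form 1%:M x x.

Definition frobenius A : R := \sum_i \sum_j A i j ^+ 2.

Lemma formDl A x y z : form A (x + y) z = form A x z + form A y z.
Proof. by rewrite /form linearD !mulmxDl mxE. Qed.

Lemma formDr A x y z : form A z (x + y) = form A z x + form A z y.
Proof. by rewrite /form !mulmxDr mxE. Qed.

Lemma formZl A a x y : form A (a *: x) y = a * form A x y.
Proof. by rewrite /form linearZ -!scalemxAl mxE. Qed.

Lemma formZr A a x y : form A x (a *: y) = a * form A x y.
Proof. by rewrite /form -!scalemxAr mxE. Qed.

Lemma formDm A B x y : form (A + B) x y = form A x y + form B x y.
Proof. by rewrite /form mulmxDr mulmxDl mxE. Qed.

Lemma formZm A a x y : form (a *: A) x y = a * form A x y.
Proof. by rewrite /form -scalemxAr -scalemxAl mxE. Qed.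

Lemma form_mulmxr A B x y : form (A *m B) x y = form A x (B *m y).
Proof. by rewrite /form !mulmxA. Qed.

Lemma form_sym A x y : A^T = A -> form A x y = form A y x.
Proof.
move=> symA; rewrite /form -[in RHS]symA -[in RHS](trmxK x) -!trmx_mul.
by rewrite [RHS]mxE mulmxA.
Qed.

Lemma sqnorm_mulmx A x : sqnorm (A *m x) = form (A^T *m A) x x.
Proof. by rewrite /sqnorm /form trmx_mul mulmx1 !mulmxA. Qed.

Lemma sqnormE x : sqnorm x = \sum_i x i 0 ^+ 2.
Proof. by rewrite /sqnorm /form mulmx1 mxE; apply: eq_bigr => i _; rewrite mxE. Qed.

Lemma sqnorm_ge0 x : 0 <= sqnorm x.
Proof. by rewrite sqnormE sumr_ge0 // => i _; apply: sqr_ge0. Qed.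

Lemma sqnorm_gt0 {x} : x != 0 -> 0 < sqnorm x.
Proof.
apply: contraNT; rewrite lt_def sqnorm_ge0 andbT negbK sqnormE.
rewrite psumr_eq0 => [/allP x0|i _]; last exact: sqr_ge0.
apply/eqP/matrixP => i j; rewrite (ord1 j) !mxE.
by apply/eqP; rewrite -sqrf_eq0; apply: x0; rewrite mem_index_enum.
Qed.

Lemma frobenius_ge0 A : 0 <= frobenius A.
Proof. by apply: sumr_ge0 => i _; apply: sumr_ge0 => j _; apply: sqr_ge0. Qed.

Lemma CauchySchwarz_dot x y : form 1%:M x y ^+ 2 <= sqnorm x * sqnorm y.
Proof.
have [->|y0] := eqVneq y 0.
  by rewrite /sqnorm /form !mulmx0 !mxE expr0n /= mulr0.
have c_gt0 := sqnorm_gt0 y0.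
(* expand 0 <= |c x - b y|^2 with b = <x, y>, c = |y|^2 *)
have := sqnorm_ge0 (sqnorm y *: x - form 1%:M x y *: y).
rewrite /sqnorm formDl !formDr -!scaleNr !formZl !formZr.
rewrite (form_sym _ y x (trmx1 _ _)) -!/(sqnorm _).
have := sqnorm_ge0 x; nra.
Qed.

Lemma sqnorm_mulmx_le A x : sqnorm (A *m x) <= frobenius A * sqnorm x.
Proof.
rewrite sqnormE /frobenius mulr_suml; apply: ler_sum => i _.
have -> : (A *m x) i 0 = form 1%:M (row i A)^T x.
  by rewrite /form trmxK mulmx1 -row_mul [RHS]mxE.
apply: le_trans (CauchySchwarz_dot _ _) _; rewrite sqnormE.
by under eq_bigr do rewrite !mxE.
Qed.

Lemma sqnorm_unitmx_ge A x : A \in unitmx ->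
  sqnorm x <= (1 + frobenius (invmx A)) * sqnorm (A *m x).
Proof.
move=> uA; have := sqnorm_mulmx_le (invmx A) (A *m x).
rewrite mulmxA mulVmx // mul1mx; have := sqnorm_ge0 (A *m x); lra.
Qed.

Lemma spd_form_ge0 {K} x : spd K -> 0 <= form K x x.
Proof.
case=> _ K_pos; have [->|x0] := eqVneq x 0; last exact/ltW/K_pos.
by rewrite /form mulmx0 mxE.
Qed.

Lemma spd_unitmx {K} : spd K -> K \in unitmx.
Proof.
case=> _ K_pos; rewrite unitmxE unitfE; apply/negP => /det0P [v v0 vK].
by move: (K_pos v^T); rewrite trmx_eq0 trmxK vK mul0mx mxE ltxx => /(_ v0).
Qed.

Lemma spd_shift {K tau} : spd K -> 0 <= tau -> spd (1%:M + tau *: K).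
Proof.
move=> spdK tau_ge0; split; first by rewrite linearD linearZ /= trmx1 spdK.1.
move=> x x0; rewrite -/(form _ x x) formDm formZm -/(sqnorm x).
have := sqnorm_gt0 x0; have := mulr_ge0 tau_ge0 (spd_form_ge0 x spdK); lra.
Qed.

Lemma sqnorm_shift K tau z : K^T = K ->
  sqnorm ((1%:M + tau *: K) *m z) =
  sqnorm z + 2 * tau * form K z z + tau ^+ 2 * sqnorm (K *m z).
Proof.
move=> symK; rewrite mulmxDl mul1mx -scalemxAl /sqnorm.
rewrite !formDl !formDr !formZl !formZr.
rewrite (form_sym _ (K *m z) z (trmx1 _ _)) -form_mulmxr mul1mx; ring.
Qed.

Lemma sqnorm_shift_ge K tau z : spd K -> 0 <= tau ->
  (1 + tau ^+ 2 / (1 + frobenius (invmx K))) * sqnorm z <=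
  sqnorm ((1%:M + tau *: K) *m z).
Proof.
move=> spdK tau_ge0; rewrite sqnorm_shift ?spdK.1 //.
set C := 1 + frobenius (invmx K).
have C_gt0 : 0 < C by rewrite /C; have := frobenius_ge0 (invmx K); lra.
have Kz_ge : sqnorm z / C <= sqnorm (K *m z).
  by rewrite ler_pdivrMr // mulrC; apply: sqnorm_unitmx_ge; apply: spd_unitmx.
have := ler_wpM2l (sqr_ge0 tau) Kz_ge.
have := mulr_ge0 (mulr_ge0 (ler0n _ 2) tau_ge0) (spd_form_ge0 z spdK).
rewrite mulrDl mul1r mulrA mulrAC; lra.
Qed.

End EuclideanForms.

Lemma opnorm_le (R : realType) (n : nat) (Ms A : 'M[R]_n) (c : R) : 0 <= c ->
  (forall v, v != 0 -> mnorm Ms (A *m v) / mnorm Ms v <= c) -> opnorm Ms A <= c.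
Proof.
move=> c_ge0 ratio_le; rewrite /opnorm; set S := (fun r => _).
have [[r Sr]|S0] := pselect (S !=set0)%classic.
  by apply: ge_sup; [exists r | move=> _ [v [v0 ->]]; apply: ratio_le].
suff -> : S = set0%classic by rewrite sup0.
by apply/seteqP; split => r // Sr; apply: S0; exists r.
Qed.

Section Propagator.
Context {R : realType} {n : nat} {Ms Msh Q : 'M[R]_n}.
Hypotheses (spdMsh : spd Msh) (Msh2 : Msh *m Msh = Ms).
Let K := invmx Msh *m Q *m invmx Msh.
Hypothesis spdK : spd K.
Implicit Types (tau : R) (v : 'cV[R]_n).

Lemma mnorm_sqnorm v : mnorm Ms v = Num.sqrt (sqnorm (Msh *m v)).
Proof. by rewrite /mnorm sqnorm_mulmx spdMsh.1 Msh2. Qed.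

Lemma propagator_conj tau v : 0 <= tau ->
  (1%:M + tau *: K) *m (Msh *m (propagator Ms Q tau *m v)) = Msh *m v.
Proof.
move=> tau_ge0; have uMsh := spd_unitmx spdMsh.
have QE : Q = Msh *m K *m Msh.
  by rewrite /K !mulmxA mulmxV // mul1mx -mulmxA mulVmx // mulmx1.
have shiftE : Ms + tau *: Q = Msh *m (1%:M + tau *: K) *m Msh.
  by rewrite QE -Msh2 mulmxDr mulmxDl mulmx1 -scalemxAr -scalemxAl.
have u_shift : Ms + tau *: Q \in unitmx.
  by rewrite shiftE !unitmx_mul uMsh (spd_unitmx (spd_shift spdK tau_ge0)).
rewrite -[LHS](mulKmx uMsh) -[RHS](mulKmx uMsh); congr (_ *m _).
by rewrite !mulmxA -shiftE mulmxV // mul1mx Msh2.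
Qed.

Lemma propagator_ratio_le tau v : 0 <= tau -> v != 0 ->
  mnorm Ms (propagator Ms Q tau *m v) / mnorm Ms v <=
  Num.sqrt (1 + tau ^+ 2 / (1 + frobenius (invmx K)))^-1.
Proof.
move=> tau_ge0 v0; rewrite !mnorm_sqnorm.
set d := 1 + _; set z := Msh *m _; set w := Msh *m v.
have d_ge1 : 1 <= d.
  rewrite /d lerDl divr_ge0 ?sqr_ge0 //; have := frobenius_ge0 (invmx K); lra.
have w_gt0 : 0 < sqnorm w.
  apply: sqnorm_gt0; apply: contraNneq v0 => Mv0.
  by rewrite -(mulKmx (spd_unitmx spdMsh) v) -/w Mv0 mulmx0.
have dzw : d * sqnorm z <= sqnorm w.
  by rewrite /w -(propagator_conj tau v) // sqnorm_shift_ge.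
have d_gt0 : 0 < d by lra.
rewrite ler_pdivrMr ?sqrtr_gt0 // -sqrtrM ?invr_ge0 ?(ltW d_gt0) //.
by apply: ler_wsqrtr; rewrite mulrC ler_pdivlMr // mulrC.
Qed.

Lemma opnorm_propagator_lt1 tau : 0 < tau -> opnorm Ms (propagator Ms Q tau) < 1.
Proof.
move=> tau_gt0; set C := 1 + frobenius (invmx K).
have C_gt0 : 0 < C by rewrite /C; have := frobenius_ge0 (invmx K); lra.
have d_gt1 : 1 < 1 + tau ^+ 2 / C by rewrite ltrDl divr_gt0 ?exprn_gt0.
have c_lt1 : Num.sqrt (1 + tau ^+ 2 / C)^-1 < 1.
  by rewrite -[ltRHS]sqrtr1 ltr_sqrt ?ltr01 // invf_lt1 //; lra.
apply: le_lt_trans c_lt1; apply: opnorm_le; first exact: sqrtr_ge0.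
by move=> v; apply: propagator_ratio_le; apply: ltW.
Qed.

End Propagator.

Lemma increasing_steps_gt0 {R : realType} {N : nat} {t : nat -> R} :
  (forall j : nat, (1 <= j <= N)%N -> t j.-1 < t j) ->
  forall i j : nat, (i < j <= N)%N -> 0 < t j - t i.
Proof.
move=> step_gt0 i j /andP[ij jN]; rewrite subr_gt0.
have incr : {in [pred k | k <= N]%N &, {homo t : k l / (k < l)%N >-> k < l}}.
  apply: Order.NatMonotonyTheory.homo_ltn_lt_in => [a b _ bN k /andP[_ kb]|k _ kN].
    by rewrite inE ltnW // (leq_trans kb bN).
  exact: step_gt0 k.+1 kN.
by apply: incr; rewrite // inE (leq_trans (ltnW ij) jN).
Qed.

Theorem theorem2 (R : realType) (n p : nat)
  (Ms As Msh : 'M[R]_n) (Mz Az : 'M[R]_p.+1)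
  (hMs : spd Ms)
  (hMsh : spd Msh) (hMsh2 : Msh *m Msh = Ms)  (* Msh = Ms^{1/2} *)
  (hK : spd (invmx Msh *m Qs Ms As Mz Az *m invmx Msh))
  (N m Nc : nat) (T : R) (t : nat -> R)
  (ht0 : t 0%N = 0) (htN : t N = T)
  (hmono : forall j : nat, (1 <= j <= N)%N -> t j.-1 < t j)
  (hm : (0 < m)%N) (hN : N = (m * Nc)%N) :
  (forall j : nat, (1 <= j <= N)%N ->
     opnorm Ms (propagator Ms (Qs Ms As Mz Az) (t j - t j.-1)) < 1) /\
  (forall k : nat, (1 <= k <= Nc)%N ->
     opnorm Ms (propagator Ms (Qs Ms As Mz Az) (t (m * k)%N - t (m * k.-1)%N)) < 1).
Proof.
have step_gt0 := increasing_steps_gt0 hmono.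
split=> [j /andP[j_gt0 jN] | k /andP[k_gt0 kNc]];
  apply: (opnorm_propagator_lt1 hMsh hMsh2 hK); apply: step_gt0.
- by rewrite ltn_predL j_gt0.
- by rewrite ltn_pmul2l // ltn_predL k_gt0 hN leq_pmul2l.
Qed.
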